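(* Let $\beta,\delta\in(0,1)$ and a positive integer $L$. For each $i$ consider the batch test $\tilde\phi^i_k=\mathbf 1\{\|\hat w^i_k-w^i_{\mathbf v}\|_1\ge\delta\}$ and the resulting batch test-then-punish profile $\bar{\mathbf s}_{\mathbf v}$, for some feasible payoff $\mathbf v$ with $v^i\ge\underline u^i$ for $i\in[N]$. Writing $\|w^j_{\mathbf v}\|_0=\sum_{\ell=1}^K\mathbf 1\{w^j_{\mathbf v}[a^j(\ell)]\ne0\}$, suppose that $\min_{j\in[N]}\|w^j_{\mathbf v}\|_0>1$ and $\delta<1-1/\min_{j\in[N]}\|w^j_{\mathbf v}\|_0$. Then $\mathbb P^{\bar{\mathbf s}_{\mathbf v}}(\kappa_{\boldsymbol\phi}<\infty)=1$.
   Context: Repeated game: $N$ players, finite pure action sets $\mathcal A^i=\{a^i(1),\dots,a^i(K)\}$, utilities $u^i:\mathcal A\to[0,1]$ extended multilinearly; feasible means $v^i\in\mathrm{conv}(\{u^i(a):a\in\mathcal A\})$. Public histories $h_t=(A_0,\dots,A_{t-1})$ of realized pure action profiles; each round players draw $A^i_t\sim s^i(h_t)$ independently; $\mathbb P^{\mathbf s}$ induced law. A mixed stage Nash equilibrium $\mathbf b$ is fixed, $\underline u^i=u^i(\mathbf b)$; $\mathbf w_{\mathbf v}=(w^1_{\mathbf v},\dots,w^N_{\mathbf v})$ with $u^i(\mathbf w_{\mathbf v})=v^i$. Batches $\mathcal B_k=\{Lk,\dots,L(k+1)-1\}$, $k_t=\lfloor t/L\rfloor$, $\hat w^i_k=L^{-1}(\sum_{t\in\mathcal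 B_k}\mathbf 1\{A^i_t=a^i(\ell)\})_{\ell=1}^K$. $\kappa_{\boldsymbol\phi}=\min_{i}\inf\{k\ge0:\tilde\phi^i_k=1\}$. Batch test-then-punish: $\bar s^j_{\mathbf v}(h_t)=w^j_{\mathbf v}$ if $k_t=0$; for $k_t\ge1$, $w^j_{\mathbf v}$ if $\prod_{k=1}^{k_t-1}\prod_i(1-\tilde\phi^i_k)=1$ and $b^j$ otherwise. *)

From HB Require Import structures.
From mathcomp Require Import all_boot all_order all_algebra.
From mathcomp Require Import all_classical all_reals all_analysis.
Set Implicit Arguments. Unset Strict Implicit. Unset Printing Implicit Defensive.
Import Order.TTheory GRing.Theory Num.Theory.
Local Open Scope ring_scope.

(* Pure action profiles: player i in 'I_N plays action a^i(l), l in 'I_K. *)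
Definition prof (N K : nat) := {ffun 'I_N -> 'I_K}.

Section Game.
Variables (R : realType) (N K : nat).

Definition is_mixed (x : {ffun 'I_K -> R}) : Prop :=
  (forall l, 0 <= x l) /\ \sum_(l < K) x l = 1.

Definition mlin (u : prof N K -> R) (s : 'I_N -> {ffun 'I_K -> R}) : R :=
  \sum_(a : prof N K) (\prod_(j < N) s j (a j)) * u a.

Definition dev (s : 'I_N -> {ffun 'I_K -> R}) (i : 'I_N) (x : {ffun 'I_K -> R})
  : 'I_N -> {ffun 'I_K -> R} := fun j => if j == i then x else s j.

Definition is_stage_NE (u : 'I_N -> prof N K -> R) (s : 'I_N -> {ffun 'I_K -> R}) : Prop :=
  (forall j, is_mixed (s j)) /\
  forall i x, is_mixed x -> mlin (u i) (dev s i x) <= mlin (u i) s.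

Definition feasible (u : 'I_N -> prof N K -> R) (v : 'I_N -> R) : Prop :=
  forall i, exists lam : {ffun prof N K -> R},
    [/\ forall a, 0 <= lam a, \sum_(a : prof N K) lam a = 1 &
        v i = \sum_(a : prof N K) lam a * u i a].

Definition norm0 (x : {ffun 'I_K -> R}) : nat := #|[pred l | x l != 0]|.

Variables (L : nat) (delta : R) (w b : 'I_N -> {ffun 'I_K -> R}).

Definition hatw (h : seq (prof N K)) (i : 'I_N) (k : nat) (l : 'I_K) : R :=
  (\sum_(L * k <= t < L * k.+1)
      (if onth h t is Some a then ((a i == l) : nat)%:R else 0)) / L%:R.

Definition phi (h : seq (prof N K)) (i : 'I_N) (k : nat) : bool :=
  delta <= \sum_(l < K) `|hatw h i k l - w i l|.

(* batch test-then-punish profile; h is the history h_t, t = size h *)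
Definition sbar (h : seq (prof N K)) (j : 'I_N) : {ffun 'I_K -> R} :=
  let kt := (size h %/ L)%N in
  if kt == 0%N then w j
  else if [forall i, all (fun k => ~~ phi h i k) (iota 1 kt.-1)] then w j
  else b j.

End Game.

Definition hist (Omega : Type) N K (A : nat -> Omega -> prof N K) (om : Omega) (t : nat)
  : seq (prof N K) := [seq A s om | s <- iota 0 t].

(* A is distributed according to P^s: players draw independently from s^i(h_t) *)
Definition induces (R : realType) (d : measure_display) (Omega : measurableType d)
  (P : probability Omega R) N K (A : nat -> Omega -> prof N K)
  (s : seq (prof N K) -> 'I_N -> {ffun 'I_K -> R}) : Prop :=
  forall h : seq (prof N K),
    P [set om : Omega | hist A om (size h) = h]%classic =
    (\prod_(t < size h) \prod_(i < N) s (take t h) i (tnth (in_tuple h) t i))%:E.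

Definition kappa_finite (Omega : Type) (R : realType) N K L (delta : R)
  (w : 'I_N -> {ffun 'I_K -> R}) (A : nat -> Omega -> prof N K) : set Omega :=
  [set om : Omega | exists k : nat, [exists i : 'I_N, phi L delta w (hist A om (L * k.+1)) i k]]%classic.

From HB Require Import structures.
From mathcomp Require Import all_boot all_order all_algebra.
From mathcomp Require Import all_classical all_reals all_analysis.
From mathcomp Require Import ring.
Import Order.TTheory GRing.Theory Num.Theory numFieldNormedType.Exports.
Set Implicit Arguments. Unset Strict Implicit. Unset Printing Implicit Defensive.
Local Open Scope ring_scope.

(* Fix a player [i0] and an action [l0] of smallest positive weight
   [c = w i0 l0 <= 1 / ||w i0||_0], so that [delta < 1 - c].  As long as no test has
   fired, everybody keeps drawing from [w].  If during a batch player [i0] plays [l0] in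
   all [L] rounds, its empirical frequency is the point mass at [l0], at L1-distance
   [>= 1 - c > delta] from [w i0], and the test fires.  So, given that the first [n]
   batches raised no alarm, the next one passes with probability at most
   [q = 1 - c ^ L < 1], and the event that no alarm is ever raised has probability at
   most [q ^ n] for every [n]. *)

Section Continuations.
Variables (R : numDomainType) (X : finType).

Fixpoint cont_sum (j : nat) (F : seq X -> R) (h : seq X) : R :=
  if j is j'.+1 then \sum_(a : X) cont_sum j' F (rcons h a) else F h.

Lemma cont_sumD i j F h : cont_sum (i + j) F h = cont_sum i (cont_sum j F) h.
Proof. by elim: i h => [|i IH] h //=; apply: eq_bigr => a _; apply: IH. Qed.

Lemma cont_sumZ j c F h : cont_sum j (fun g => c * F g) h = c * cont_sum j F h.
Proof.
by elim: j h => [|j IH] h //=; rewrite mulr_sumr; apply: eq_bigr => a _; apply: IH.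
Qed.

Lemma ler_cont_sum j F G h : (forall g, size g = (size h + j)%N -> F g <= G g) ->
  cont_sum j F h <= cont_sum j G h.
Proof.
elim: j h => [|j IH] h FG /=; first by apply: FG; rewrite addn0.
apply: ler_sum => a _; apply: IH => g Hg; apply: FG.
by rewrite Hg size_rcons addSnnS.
Qed.

End Continuations.

Section PathWeight.
Variables (R : numDomainType) (N K : nat).
Variable s : seq (prof N K) -> 'I_N -> {ffun 'I_K -> R}.

Definition path_weight (h : seq (prof N K)) : R :=
  \prod_(t < size h) \prod_(i < N) s (take t h) i (tnth (in_tuple h) t i).

Lemma path_weightE a0 h : path_weight h =
  \prod_(t < size h) \prod_(i < N) s (take t h) i (nth a0 h t i).
Proof. by apply: eq_bigr => t _; rewrite (tnth_nth a0). Qed.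

Lemma path_weight_nil : path_weight [::] = 1.
Proof. by rewrite /path_weight big_ord0. Qed.

Lemma path_weight_rcons h a :
  path_weight (rcons h a) = path_weight h * \prod_(i < N) s h i (a i).
Proof.
rewrite !(path_weightE a) size_rcons big_ord_recr /=; congr (_ * _).
  apply: eq_bigr => t _; apply: eq_bigr => i _.
  by rewrite nth_rcons ltn_ord -cats1 takel_cat // ltnW.
by rewrite -cats1 take_size_cat // nth_cat ltnn subnn.
Qed.

Lemma path_weight_ge0 h : (forall g i l, 0 <= s g i l) -> 0 <= path_weight h.
Proof. by move=> s_ge0; do 2![apply: prodr_ge0 => ? _]. Qed.

End PathWeight.

Section ProductProfile.
Variables (R : numDomainType) (N K : nat) (x : 'I_N -> {ffun 'I_K -> R}).
Hypothesis x_sum1 : forall j, \sum_(l < K) x j l = 1.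

Definition prod_profile (a : prof N K) : R := \prod_(i < N) x i (a i).

Lemma sum_prod_profile : \sum_(a : prof N K) prod_profile a = 1.
Proof.
rewrite /prod_profile -(bigA_distr_bigA (fun i l => x i l)) /=.
by rewrite big1 // => i _; rewrite x_sum1.
Qed.

Lemma sum_prod_profile_marginal i0 l0 :
  \sum_(a : prof N K) (a i0 == l0)%:R * prod_profile a = x i0 l0.
Proof.
pose y i l := if i == i0 then (l == l0)%:R * x i l else x i l.
transitivity (\sum_(a : prof N K) \prod_(i < N) y i (a i)).
  apply: eq_bigr => a _; rewrite /prod_profile (bigD1 i0) //= [RHS](bigD1 i0) //=.
  by rewrite /y eqxx mulrA; congr (_ * _); apply: eq_bigr => i /negbTE ->.
rewrite -(bigA_distr_bigA y) /= (bigD1 i0) //= [X in _ * X]big1 ?mulr1; last first.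
  by move=> i /negbTE i_i0; rewrite /y i_i0 x_sum1.
rewrite /y eqxx (bigD1 l0) //= eqxx mul1r big1 ?addr0 // => l /negbTE ->.
by rewrite mul0r.
Qed.

End ProductProfile.

Section BatchTests.
Variables (R : realType) (N K L : nat) (delta : R) (w b : 'I_N -> {ffun 'I_K -> R}).
Local Notation X := (prof N K).
Local Notation test := (phi L delta w).
Local Notation sb := (sbar L delta w b).

Definition no_alarm (n : nat) (h : seq X) : bool :=
  [forall k : 'I_n, [forall i : 'I_N, ~~ test h i k]].

Lemma phi_take h M i k : (L * k.+1 <= M)%N -> test (take M h) i k = test h i k.
Proof.
move=> le_M; rewrite /phi /hatw; congr (_ <= _); apply: eq_bigr => l _.
congr (`|_ / _ - _|); apply: eq_big_nat => t /andP[_ lt_t].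
by rewrite !onthE map_take nth_take // (leq_trans lt_t).
Qed.

Lemma no_alarm_take n M h : (L * n <= M)%N -> no_alarm n (take M h) = no_alarm n h.
Proof.
move=> le_M; apply: eq_forallb => k; apply: eq_forallb => i.
by rewrite phi_take // (leq_trans _ le_M) // leq_mul2l ltn_ord orbT.
Qed.

Lemma no_alarm_rcons n h a : (L * n <= size h)%N ->
  no_alarm n (rcons h a) = no_alarm n h.
Proof. by move=> le_h; rewrite -(no_alarm_take (M := size h)) // -cats1 take_size_cat. Qed.

Lemma sbar_no_alarm n h : (0 < L)%N -> (L * n <= size h < L * n.+1)%N ->
  no_alarm n h -> forall j, sb h j = w j.
Proof.
move=> L_gt0 /andP[ge_h lt_h] /forallP quiet j; rewrite /sbar.
have -> : (size h %/ L = n)%N.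
  by apply/anti_leq; rewrite -ltnS ltn_divLR // leq_divRL // -!(mulnC L) lt_h ge_h.
case: ifP => // /negbT n_neq0; case: ifP => // /negP[].
apply/forallP => i; apply/allP => k; rewrite mem_iota add1n prednK ?lt0n //.
by case/andP=> _ lt_kn; move/forallP: (quiet (Ordinal lt_kn)) => /(_ i).
Qed.

Variables (i0 : 'I_N) (l0 : 'I_K).

Definition batch_constant (n : nat) (h : seq X) : bool :=
  all (fun a : X => a i0 == l0) (drop (L * n) h).

Lemma hatw_batch_constant n h : (0 < L)%N -> size h = (L * n.+1)%N ->
  batch_constant n h -> hatw R L h i0 n l0 = 1.
Proof.
move=> L_gt0 size_h const_h; rewrite /hatw (eq_big_nat _ _ (F2 := fun _ => 1)).
  by rewrite sumr_const_nat mulnSr addKn divff // pnatr_eq0 -lt0n.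
move=> t /andP[ge_t lt_t]; pose a0 : X := [ffun => l0].
rewrite onthE (nth_map a0) ?size_h //.
have : nth a0 h t \in drop (L * n) h.
  by rewrite -(subnKC ge_t) -nth_drop mem_nth // size_drop ltn_sub2rE // size_h.
by move/(allP const_h) => /eqP ->; rewrite eqxx.
Qed.

Lemma phi_batch_constant n h : (0 < L)%N -> delta < 1 - w i0 l0 ->
  size h = (L * n.+1)%N -> batch_constant n h -> test h i0 n.
Proof.
move=> L_gt0 lt_delta size_h const_h; rewrite /phi (bigD1 l0) //=.
rewrite hatw_batch_constant // (le_trans (ltW lt_delta)) // (le_trans (ler_norm _)) //.
by rewrite lerDl sumr_ge0.
Qed.

End BatchTests.

Section BatchSurvival.
Variables (R : realType) (N K L : nat) (delta : R) (w b : 'I_N -> {ffun 'I_K -> R}).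
Variables (i0 : 'I_N) (l0 : 'I_K).
Hypotheses (L_gt0 : (0 < L)%N) (lt_delta : delta < 1 - w i0 l0).
Hypotheses (w_mixed : forall j, is_mixed (w j)) (b_mixed : forall j, is_mixed (b j)).
Local Notation X := (prof N K).
Local Notation sb := (sbar L delta w b).
Local Notation c := (w i0 l0).
Local Notation const := (batch_constant L i0 l0).
Local Notation quiet_mass n := (fun g => (no_alarm L delta w n g)%:R * path_weight sb g).

Let w_sum1 j : \sum_(l < K) w j l = 1. Proof. exact: (w_mixed j).2. Qed.

Lemma sbar_ge0 h j l : 0 <= sb h j l.
Proof.
rewrite /sbar; case: ifP => _; first exact: (w_mixed j).1.
by case: ifP => _; [exact: (w_mixed j).1|exact: (b_mixed j).1].
Qed.

Lemma no_alarmS_not_constant n h : size h = (L * n.+1)%N ->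
  no_alarm L delta w n.+1 h -> no_alarm L delta w n h && ~~ const n h.
Proof.
move=> size_h /forallP quiet; apply/andP; split.
  by apply/forallP => k; exact: (quiet (widen_ord (leqnSn n) k)).
apply/negP => /(phi_batch_constant L_gt0 lt_delta size_h).
by move/forallP: (quiet ord_max) => /(_ i0) /negP.
Qed.

Lemma sum_path_weight_rcons n h j : (L * n <= size h < L * n.+1)%N ->
  no_alarm L delta w n h ->
  \sum_(a : X) path_weight sb (rcons h a) * (1 - (const n (rcons h a))%:R * c ^+ j) =
  path_weight sb h * (1 - (const n h)%:R * c ^+ j.+1).
Proof.
move=> /andP[ge_h lt_h] quiet.
have sb_w := sbar_no_alarm b L_gt0 _ quiet.
have step a : path_weight sb (rcons h a) = path_weight sb h * prod_profile w a.
  by rewrite path_weight_rcons; congr (_ * _); apply: eq_bigr => i _; rewrite sb_w ?ge_h.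
under eq_bigr => a _ do rewrite step /batch_constant drop_rcons // all_rcons -/(const n h).
case: (const n h) => /=.
  rewrite (eq_bigr (fun a : X => path_weight sb h * prod_profile w a -
    path_weight sb h * c ^+ j * ((a i0 == l0)%:R * prod_profile w a))) => [|a _]; last first.
    by rewrite andbT; ring.
  rewrite sumrB -!mulr_sumr sum_prod_profile_marginal // sum_prod_profile // exprSr.
  by ring.
under eq_bigr => a _ do rewrite andbF mul0r subr0 mulr1.
by rewrite -mulr_sumr sum_prod_profile // mul0r subr0.
Qed.

(* [c ^+ j] is the chance that the [j] remaining rounds keep batch [n] constant,
   which would force an alarm. *)
Lemma batch_survival n j h : (size h + j = L * n.+1)%N -> (L * n <= size h)%N ->
  cont_sum j (quiet_mass n.+1) h <=
  (no_alarm L delta w n h)%:R * path_weight sb h * (1 - (const n h)%:R * c ^+ j).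
Proof.
have weight_ge0 g : 0 <= path_weight sb g by apply: path_weight_ge0 => *; apply: sbar_ge0.
elim: j h => [|j IH] h /=.
  rewrite addn0 => size_h _; case quiet: (no_alarm _ _ _ n.+1 h).
    case/andP: (no_alarmS_not_constant size_h quiet) => -> /negbTE ->.
    by rewrite mul0r subr0 !mul1r mulr1.
  by rewrite mul0r !mulr_ge0 // expr0 mulr1 subr_ge0; case: (const n h).
move=> size_h ge_h.
have lt_h : (size h < L * n.+1)%N by rewrite -size_h addnS ltnS leq_addr.
have size_ha a : (size (rcons h a) + j = L * n.+1)%N by rewrite size_rcons addSnnS.
have ge_ha a : (L * n <= size (rcons h a))%N by rewrite size_rcons leqW.
apply: le_trans (ler_sum _ (fun a _ => IH (rcons h a) (size_ha a) (ge_ha a))) _.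
under eq_bigr => a _ do rewrite no_alarm_rcons //.
case quiet: (no_alarm _ _ _ n h); last by rewrite big1 ?mul0r // => a _; rewrite !mul0r.
under eq_bigr => a _ do rewrite mul1r.
by rewrite sum_path_weight_rcons ?ge_h ?mul1r.
Qed.

Lemma no_alarm_decay n :
  cont_sum (L * n.+1) (quiet_mass n.+1) [::] <= (1 - c ^+ L) * cont_sum (L * n) (quiet_mass n) [::].
Proof.
rewrite mulnSr cont_sumD -cont_sumZ; apply: ler_cont_sum => g /=; rewrite add0n => size_g.
apply: le_trans (batch_survival _ _) _; rewrite ?size_g ?mulnSr //.
by rewrite /batch_constant drop_oversize ?size_g //= mul1r mulrC.
Qed.

Lemma survival_rate_ge0 : 0 <= 1 - c ^+ L.
Proof.
have w_ge0 := (w_mixed i0).1.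
rewrite subr_ge0 exprn_ile1 // -(w_sum1 i0) (bigD1 l0) //= lerDl.
by rewrite sumr_ge0.
Qed.

Lemma no_alarm_geometric n :
  cont_sum (L * n) (quiet_mass n) [::] <= (1 - c ^+ L) ^+ n.
Proof.
elim: n => [|n IH].
  by rewrite muln0 /= path_weight_nil mulr1 expr0 lern1 leq_b1.
by apply: le_trans (no_alarm_decay n) _; rewrite exprS ler_wpM2l // survival_rate_ge0.
Qed.

End BatchSurvival.

Section HistoryLaw.
Variables (R : realType) (d : measure_display) (Omega : measurableType d).
Variables (P : probability Omega R) (N K : nat) (A : nat -> Omega -> prof N K).
Variable s : seq (prof N K) -> 'I_N -> {ffun 'I_K -> R}.
Hypothesis A_measurable : forall t a, measurable [set om | A t om = a]%classic.
Hypothesis A_law : induces P A s.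
Local Notation X := (prof N K).
Local Open Scope classical_set_scope.

Lemma size_hist om m : size (hist A om m) = m.
Proof. by rewrite size_map size_iota. Qed.

Lemma hist_rcons om m : hist A om m.+1 = rcons (hist A om m) (A m om).
Proof. by rewrite /hist -addn1 iotaD map_cat /= add0n cats1. Qed.

Lemma hist_take om k m : (k <= m)%N -> take k (hist A om m) = hist A om k.
Proof. by move=> le_km; rewrite /hist -map_take take_iota (minn_idPl le_km). Qed.

Lemma measurable_hist m (S : pred (seq X)) : measurable [set om | S (hist A om m)].
Proof.
elim: m S => [|m IH] S.
  case S0: (S [::]).
    by rewrite (_ : [set om | _] = setT) //; apply/seteqP; split => om //= _; rewrite /hist /= S0.
  by rewrite (_ : [set om | _] = set0) //; apply/seteqP; split => om //=; rewrite /hist /= S0.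
rewrite (_ : [set om | _] = \bigcup_(a in [set: X])
   ([set om | A m om = a] `&` [set om | S (rcons (hist A om m) a)])).
  apply: fin_bigcup_measurable; first exact: finite_finset.
  by move=> a _; apply: measurableI; [exact: A_measurable|exact: (IH (fun h => S (rcons h a)))].
apply/seteqP; split => om /=; rewrite hist_rcons; first by exists (A m om).
by case=> a _ [/= <-].
Qed.

Definition cylinder (h0 : seq X) (j : nat) (S : pred (seq X)) : set Omega :=
  [set om | hist A om (size h0) = h0 /\ S (hist A om (size h0 + j))].

Lemma measurable_cylinder h0 j S : measurable (cylinder h0 j S).
Proof.
rewrite (_ : cylinder h0 j S =
  [set om | (take (size h0) (hist A om (size h0 + j)) == h0) && S (hist A om (size h0 + j))]).
  exact: (measurable_hist _ (fun h => (take (size h0) h == h0) && S h)).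
apply/seteqP; split => om /=; rewrite hist_take ?leq_addr //.
  by case=> -> ->; rewrite eqxx.
by case/andP=> /eqP.
Qed.

Lemma cylinderS h0 j S :
  cylinder h0 j.+1 S = \bigcup_(a in [set: X]) cylinder (rcons h0 a) j S.
Proof.
apply/seteqP; split => om /=.
  case=> h0E HS; exists (A (size h0) om) => //.
  by rewrite /cylinder /= size_rcons hist_rcons h0E addSnnS.
case=> a _; rewrite /cylinder /= size_rcons hist_rcons -addSnnS => -[+ ->].
by rewrite -!cats1 => /(congr1 (take (size h0))); rewrite !take_size_cat ?size_hist.
Qed.

Lemma prob_cylinder S j h0 :
  P (cylinder h0 j S) = (cont_sum j (fun h => (S h)%:R * path_weight s h) h0)%:E.
Proof.
elim: j h0 => [|j IH] h0 /=.
  rewrite /cylinder addn0; case S0: (S h0).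
    rewrite mul1r -A_law; congr (P _); apply/seteqP; split => om /=; first by case.
    by move=> E; rewrite E S0.
  rewrite mul0r (_ : [set om | _] = set0) ?measure0 //.
  by apply/seteqP; split => om //= [E]; rewrite E S0.
rewrite cylinderS measure_fin_bigcup.
- rewrite (fsbigE (index_enum X)) ?index_enum_uniq //.
  rewrite (eq_bigr (fun a => (cont_sum j (fun h => (S h)%:R * path_weight s h) (rcons h0 a))%:E)).
    by rewrite sumEFin; congr (_%:E); apply: eq_bigl => a; rewrite in_setT.
  by move=> a _; exact: IH.
- by move=> a _; rewrite mem_index_enum.
- exact: finite_finset.
- apply/trivIsetP => a a' _ _ neq_aa'; apply/seteqP; split => om //= [[E _] [E' _]].
  move: E E'; rewrite !size_rcons => -> /(congr1 (last a)); rewrite !last_rcons => aE.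
  by move/eqP: neq_aa'; rewrite aE.
- by move=> a _; exact: measurable_cylinder.
Qed.

End HistoryLaw.

Lemma ge0_lee_expr_eq0 (R : realType) (q : R) (x : \bar R) : 0 <= q < 1 ->
  (0 <= x)%E -> (forall n, x <= (q ^+ n)%:E)%E -> x = 0%E.
Proof.
case/andP=> q_ge0 q_lt1; case: x => [r| |] //= r_ge0 le_rq; last by have := le_rq 0%N.
have q_norm : `|q| < 1 by rewrite ger0_norm.
have qn_cvg := cvg_expr q_norm.
rewrite lee_fin in r_ge0; congr (_%:E); apply/eqP; rewrite eq_le r_ge0 andbT.
rewrite -(cvg_lim _ qn_cvg) //; apply: limr_ge; first by apply/cvg_ex; exists 0.
by apply: nearW => n; rewrite -lee_fin.
Qed.

Lemma min_positive_weight (R : realType) (K : nat) (x : {ffun 'I_K -> R}) :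
  is_mixed x -> exists l, 0 < x l /\ x l * (norm0 x)%:R <= 1.
Proof.
case=> x_ge0 x_sum1.
have [l1 x_l1] : exists l, x l != 0.
  apply/existsP; apply: contraT; rewrite negb_exists => /forallP x0.
  move: x_sum1; rewrite big1 => [/eqP|l _]; first by rewrite eq_sym oner_eq0.
  by apply/eqP/negPn; exact: x0.
case: (@arg_minP _ _ _ l1 (fun l => x l != 0) x x_l1) => l0 x_l0 min_l0.
exists l0; split; first by rewrite lt0r x_l0 x_ge0.
rewrite mulr_natr /norm0 -sumr_const -x_sum1 [leRHS](bigID (fun l => x l != 0)) /=.
rewrite [X in _ <= _ + X]big1 ?addr0 => [|l /negPn/eqP //].
by apply: ler_sum => l; exact: min_l0.
Qed.

Section Kappa.
Variables (R : realType) (d : measure_display) (Omega : measurableType d).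
Variables (N K L : nat) (delta : R) (w : 'I_N -> {ffun 'I_K -> R}).
Variable A : nat -> Omega -> prof N K.
Hypothesis A_measurable : forall t a, measurable [set om | A t om = a]%classic.
Local Open Scope classical_set_scope.

Lemma measurable_kappa_finite : measurable (kappa_finite L delta w A).
Proof.
rewrite (_ : kappa_finite _ _ _ _ = \bigcup_k
  [set om | [exists i, phi L delta w (hist A om (L * k.+1)) i k]]).
  apply: bigcupT_measurable => k.
  exact: (measurable_hist A_measurable _ (fun h => [exists i, phi L delta w h i k])).
by apply/seteqP; split => om [k]; exists k.
Qed.

Lemma kappa_infinite_no_alarm n :
  ~` kappa_finite L delta w A `<=` cylinder A [::] (L * n) (no_alarm L delta w n).
Proof.
move=> om /= no_kappa; split => //; apply/forallP => k; apply/forallP => i.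
apply: contra_notN no_kappa => alarm; exists k; apply/existsP; exists i.
have le_kn : (L * k.+1 <= L * n)%N by rewrite leq_mul2l ltn_ord orbT.
have <- := hist_take A om le_kn.
by rewrite phi_take.
Qed.

End Kappa.

Unset Implicit Arguments.
Set Strict Implicit.

Theorem mainTheorem10 (R : realType) (d : measure_display) (Omega : measurableType d)
  (P : probability Omega R) (N K L : nat)
  (u : 'I_N -> prof N K -> R) (b w : 'I_N -> {ffun 'I_K -> R}) (v : 'I_N -> R)
  (beta delta : R) (A : nat -> Omega -> prof N K) :
  0 < beta < 1 -> 0 < delta < 1 -> (0 < L)%N -> (0 < N)%N ->
  is_stage_NE u b ->
  feasible u v ->
  (forall i, mlin (u i) b <= v i) ->
  (forall j, is_mixed (w j)) ->
  (forall i, mlin (u i) w = v i) ->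
  (1 < \big[minn/K]_(j < N) norm0 (w j))%N ->
  delta < 1 - ((\big[minn/K]_(j < N) norm0 (w j))%:R)^-1 ->
  (forall t (a : prof N K), measurable [set om : Omega | A t om = a]%classic) ->
  induces P A (sbar L delta w b) ->
  P (kappa_finite L delta w A) = 1%E.
Proof.
move=> _ _ L_gt0 N_gt0 [b_mixed _] _ _ w_mixed _ m_gt1 lt_delta_m A_meas A_law.
set m := \big[minn/K]_(j < N) norm0 (w j) in m_gt1 lt_delta_m.
pose i0 : 'I_N := Ordinal N_gt0.
have [l0 [c_gt0 c_norm0]] := min_positive_weight (w_mixed i0).
have c_le : w i0 l0 <= m%:R^-1.
  rewrite -[leRHS]mul1r ler_pdivlMr ?ltr0n 1?ltnW // (le_trans _ c_norm0) //.
  by rewrite ler_pM2l // ler_nat /m; exact: (bigmin_le K i0 (fun j => norm0 (w j))).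
have lt_delta : delta < 1 - w i0 l0 by apply: (lt_le_trans lt_delta_m); rewrite lerD2l lerN2.
have survival : 0 <= 1 - w i0 l0 ^+ L < 1.
  by rewrite (survival_rate_ge0 L i0 l0 w_mixed) gtrDl oppr_lt0 exprn_gt0.
have kappa_meas := measurable_kappa_finite L delta w A_meas.
rewrite -(setCK (kappa_finite _ _ _ _)) probability_setC; last exact: measurableC.
rewrite (ge0_lee_expr_eq0 survival (measure_ge0 _ _)) ?sube0 // => n.
apply: (le_trans (y := P (cylinder A [::] (L * n) (no_alarm L delta w n)))).
  apply: le_measure (kappa_infinite_no_alarm n); rewrite inE.
    exact: measurableC.
  exact: measurable_cylinder.
by rewrite (prob_cylinder A_meas A_law) lee_fin no_alarm_geometric.
Qed.
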